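(* Let $k,n\in\mathbb{N}$, let $w\in\mathbb{R}^+$, let $f,g:\mathbb{N}\to\mathbb{R}^+$ be increasing functions, and let $\mathcal{H}$ be a class of graphs such that $\widehat{\mathcal{H}}$ admits $(f,g)$-fan-partitions. Let $G$ be an $n$-vertex graph with a star-decomposition $(B_s:s\in V(S))$ of adhesion at most $k$ such that, if $r$ is the centre of the star $S$, then $\langle B_r\rangle_G\in\mathcal{H}$, and $|B_s\setminus B_r|\leq w$ for every $s\in V(S)\setminus\{r\}$. Then there exists $X\subseteq V(G)$ with $|X|\leq f(kn)$ such that $G-X$ admits a path-partition of width at most $\max(2g(kn),w)$.
   Context: $\mathbb{R}^+$ is the set of strictly positive reals, $\mathbb{N}=\{1,2,\dots\}$; $f$ is increasing if $n<m$ implies $f(n)<f(m)$. A class of graphs is closed under isomorphism. For a class $\mathcal{H}$, $\widehat{\mathcal{H}}$ denotes the class of graphs $G$ having a set $Z\subseteq V(G)$ of degree-$1$ vertices of $G$ with $G-Z\in\mathcal{H}$. A tree-decomposition of $G$ is a family $(B_t\subseteq V(G):t\in V(T))$ indexed by a tree $T$ such that for each $v\in V(G)$ the set $\{t:v\in B_t\}$ induces a nonempty subtree of $T$, and each edge of $G$ has both ends in some $B_t$. It is a star-decomposition if $T$ is a star (a tree with a vertex, the centre, adjacent to all others). Its adhesion is $\max_{tt'\in E(T)}|B_t\cap B_{t'}|$. The torso $\langle B_t\rangle_G$ is obtained from $G[B_t]$ by adding an edge $uv$ whenever $u,v\in B_t\cap B_{t'}$ for some $tt'\in E(T)$. A partition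 of $G$ is a collection of pairwise disjoint (possibly empty) subsets of $V(G)$ with union $V(G)$; its width is its largest part size; it is a path-partition if its quotient (parts as vertices, adjacent when joined by an edge of $G$) is isomorphic to a subgraph of a path. A $(k,w)$-fan-partition of $G$ is a partition with a part $P$, $|P|\leq k$, such that the remaining parts form a path-partition of $G-P$ of width at most $w$. A class $\mathcal{G}$ admits $(f,g)$-fan-partitions if every $G\in\mathcal{G}$ admits an $(f(|V(G)|),g(|V(G)|))$-fan-partition. *)

From mathcomp Require Import all_boot.
From Stdlib Require Import Reals.
Set Implicit Arguments. Unset Strict Implicit. Unset Printing Implicit Defensive.

Record graph := Graph {
  vert :> finType;
  adj : rel vert;
  adj_sym : symmetric adj;
  adj_irr : irreflexive adj }.
Arguments adj : clear implicits.

(** A class of graphs: a predicate on graphs; closure under isomorphism is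
    stated separately. *)
Definition isomorphic (G1 G2 : graph) : Prop :=
  exists2 phi : vert G1 -> vert G2, bijective phi &
    forall u v, adj G2 (phi u) (phi v) = adj G1 u v.

Definition iso_closed (H : graph -> Prop) : Prop :=
  forall G1 G2, isomorphic G1 G2 -> H G1 -> H G2.

Section Induced.
Variables (G : graph) (D : {set vert G}).
Definition ivert : finType := {x : vert G | x \in D}.
Definition iadj : rel ivert := fun u v => adj G (val u) (val v).
Lemma iadj_sym : symmetric iadj.
Proof. by move=> u v; rewrite /iadj adj_sym. Qed.
Lemma iadj_irr : irreflexive iadj.
Proof. by move=> u; rewrite /iadj adj_irr. Qed.
Definition induced : graph := Graph iadj_sym iadj_irr.
End Induced.

Definition gdel (G : graph) (X : {set vert G}) : graph := induced (~: X).

Definition degree (G : graph) (x : vert G) : nat := #|[set y | adj G x y]|.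

Definition hat (H : graph -> Prop) (G : graph) : Prop :=
  exists Z : {set vert G}, (forall z, z \in Z -> degree z = 1) /\ H (gdel Z).

(** Partitions: pairwise disjoint (possibly empty) subsets with union V(G). *)
Definition is_partition (G : graph) (P : {set {set vert G}}) : Prop :=
  trivIset P /\ cover P = [set: vert G].

Definition width (G : graph) (P : {set {set vert G}}) : nat :=
  \max_(A in P) #|A|.

Definition quot_adj (G : graph) (A B : {set vert G}) : Prop :=
  A != B /\ exists u v, [/\ u \in A, v \in B & adj G u v].

(** The quotient is isomorphic to a subgraph of a path: there is an injective
    map of the parts into the vertices of a path (labelled by naturals, the
    path edges being i -- i+1) sending quotient edges to path edges. *)
Definition is_path_partition (G : graph) (P : {set {set vert G}}) : Prop :=
  is_partition P /\
  exists phi : {set vert G} -> nat,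
    {in P &, injective phi} /\
    forall A B, A \in P -> B \in P -> quot_adj A B ->
      (phi A).+1 = phi B \/ (phi B).+1 = phi A.

Definition fan_partition (G : graph) (k w : R) : Prop :=
  exists P : {set vert G}, Rle (INR #|P|) k /\
    exists Q : {set {set vert (gdel P)}},
      is_path_partition Q /\ Rle (INR (width Q)) w.

(** A class admits (f,g)-fan-partitions (graphs have n >= 1 vertices, as f, g
    are only defined on N = {1,2,...}). *)
Definition admits_fan (C : graph -> Prop) (f g : nat -> R) : Prop :=
  forall G, C G -> (0 < #|vert G|)%N -> fan_partition G (f #|vert G|) (g #|vert G|).

Definition is_star (T : graph) (r : vert T) : Prop :=
  (forall t, t != r -> adj T r t) /\
  (forall t t', adj T t t' -> t = r \/ t' = r).

Definition connected_in (T : graph) (S : {set vert T}) : Prop :=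
  forall t t', t \in S -> t' \in S ->
    connect (fun x y => [&& adj T x y, x \in S & y \in S]) t t'.

Definition tree_decomposition (G T : graph) (B : vert T -> {set vert G}) : Prop :=
  (forall v, [set t | v \in B t] != set0 /\ connected_in [set t | v \in B t]) /\
  (forall u v, adj G u v -> exists t, u \in B t /\ v \in B t).

Definition adhesion_le (G T : graph) (B : vert T -> {set vert G}) (k : nat) : Prop :=
  forall t t', adj T t t' -> (#|B t :&: B t'| <= k)%N.

Section Torso.
Variables (G T : graph) (B : vert T -> {set vert G}) (t : vert T).
Definition tvert : finType := {x : vert G | x \in B t}.
Definition tadj : rel tvert := fun u v =>
  adj G (val u) (val v) ||
  ((val u != val v) && [exists t', [&& adj T t t', val u \in B t' & val v \in B t']]).
Lemma tadj_sym : symmetric tadj.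
Proof.
move=> u v; rewrite /tadj adj_sym eq_sym; congr (_ || (_ && _)).
by apply/existsP/existsP=> -[x /and3P[a b c]]; exists x; rewrite a b c.
Qed.
Lemma tadj_irr : irreflexive tadj.
Proof. by move=> u; rewrite /tadj adj_irr eqxx. Qed.
Definition torso : graph := Graph tadj_sym tadj_irr.
End Torso.

Definition has_path_partition (G : graph) (w : R) : Prop :=
  exists Q : {set {set vert G}}, is_path_partition Q /\ Rle (INR (width Q)) w.

From mathcomp Require Import all_boot.
From Stdlib Require Import Reals Lra.
From mathcomp Require Import zify.
Set Implicit Arguments. Unset Strict Implicit. Unset Printing Implicit Defensive.

(* Glue to the torso of the centre bag one pendant vertex (u, a) for every u
   outside the centre and every a in the adhesion set of the bag of u. The
   result lies in the hat class and has at most k n vertices, so it has a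
   fan-partition: an apex set P and a layering c of the rest in which edges
   join equal or consecutive layers, each of size at most g(kn). Delete the
   projection X of P to G. Centre vertices keep their layer. The surviving
   part of an adhesion set is a clique in the torso, hence spans at most two
   consecutive layers; a vertex u outside the centre goes to the lowest of
   them, or one above, according to the layer of its pendant at the lowest
   vertex, so that u is charged to a pendant in layer K-1 or K of the
   auxiliary graph. A layer of G - X is thus covered by two layers of c.
   Bags whose adhesion set is entirely deleted are cut off from the rest of
   G - X and get layers of their own, of size at most w. *)

Definition near (m n : nat) : bool := (m <= n.+1) && (n <= m.+1).

Lemma near_sym : symmetric near.
Proof. by move=> m n; rewrite /near andbC. Qed.

Section Layering.
Variable G : graph.

Definition layered (X : {set vert G}) (c : vert G -> nat) : Prop :=
  forall u v, u \notin X -> v \notin X -> adj G u v -> near (c u) (c v).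

Definition level (X : {set vert G}) (c : vert G -> nat) (i : nat) : {set vert G} :=
  [set v | (v \notin X) && (c v == i)].

Lemma has_path_partition_of_levels (c : vert G -> nat) (b : R) :
  layered set0 c -> (forall i, Rle (INR #|level set0 c i|) b) -> Rle 0 b ->
  has_path_partition G b.
Proof.
move=> c_layered c_level b_ge0.
pose Q := [set level set0 c (c x) | x in [set: vert G]].
pose phi (A : {set vert G}) := if [pick v in A] is Some v then c v else 0.
have phiE x : phi (level set0 c (c x)) = c x.
  by rewrite /phi; case: pickP => [v|/(_ x)]; rewrite !inE ?eqxx // => /eqP.
exists Q; split; first split.
- split.
    apply/trivIsetP => _ _ /imsetP[x _ ->] /imsetP[y _ ->] neq.
    apply/pred0P => v /=; rewrite !inE /=; apply/negP => /andP[/eqP ex /eqP ey].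
    by move: neq; rewrite -ex -ey eqxx.
  apply/setP => v; rewrite inE; apply/bigcupP; exists (level set0 c (c v)).
    exact: imset_f.
  by rewrite !inE eqxx.
- exists phi; split.
    by move=> _ _ /imsetP[x _ ->] /imsetP[y _ ->]; rewrite !phiE => ->.
  move=> _ _ /imsetP[x _ ->] /imsetP[y _ ->] [+ [u [v [+ + uv]]]].
  rewrite !inE /= !phiE => neq /eqP cux /eqP cvy; rewrite -cux -cvy in neq *.
  have : near (c u) (c v) by apply: c_layered; rewrite ?inE.
  have : c u != c v by apply: contraNneq neq => ->.
  rewrite /near; lia.
- rewrite /width; case: (posnP #|Q|) => [/eqP|Q_gt0].
    by rewrite cards_eq0 => /eqP ->; rewrite big_set0.
  have [_ /imsetP[x _ ->] ->] := eq_bigmax_cond (fun A : {set vert G} => #|A|) Q_gt0.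
  exact: c_level.
Qed.

End Layering.

Lemma has_path_partition_gdel (G : graph) (X : {set vert G}) (c : vert G -> nat)
    (b : R) :
  layered X c -> (forall i, Rle (INR #|level X c i|) b) -> Rle 0 b ->
  has_path_partition (gdel X) b.
Proof.
move=> c_layered c_level b_ge0.
have outX (u : vert (gdel X)) : val u \notin X by have := valP u; rewrite inE.
apply: (has_path_partition_of_levels (c := fun u : vert (gdel X) => c (val u))) => //.
  by move=> u v _ _ uv; exact: c_layered.
move=> i; apply: Rle_trans (c_level i); apply/le_INR/leP.
rewrite -(card_imset _ val_inj); apply/subset_leq_card/subsetP => _ /imsetP[u + ->].
by rewrite !inE /= outX.
Qed.

Lemma fan_partition_layering (G : graph) (F Gg : R) : fan_partition G F Gg ->
  exists (P : {set vert G}) (c : vert G -> nat) (W : nat),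
    [/\ Rle (INR #|P|) F, Rle (INR W) Gg, layered P c &
        forall i, #|level P c i| <= W].
Proof.
case=> P [P_card [Q [[[Q_triv Q_cover] [phi [phi_inj phi_adj]]] Q_width]]].
have notP u : u \notin P -> u \in ~: P by rewrite inE.
pose c (v : vert G) :=
  if insub v : option (vert (gdel P)) is Some y then phi (pblock Q y) else 0.
have cE (y : vert (gdel P)) : c (val y) = phi (pblock Q y) by rewrite /c valK.
have blockQ (y : vert (gdel P)) : pblock Q y \in Q.
  by apply: pblock_mem; rewrite Q_cover inE.
have in_block (y : vert (gdel P)) : y \in pblock Q y.
  by rewrite mem_pblock Q_cover inE.
exists P, c, (width Q); split => //.
- move=> u v uP vP uv.
  have := cE (Sub u (notP _ uP)); have := cE (Sub v (notP _ vP)).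
  rewrite !SubK => -> ->.
  set yu := Sub u _; set yv := Sub v _.
  case: (eqVneq (pblock Q yu) (pblock Q yv)) => [->|neq]; first by rewrite /near leqnSn.
  have adj_blocks : quot_adj (pblock Q yu) (pblock Q yv) by split => //; exists yu, yv.
  by case: (phi_adj _ _ (blockQ yu) (blockQ yv) adj_blocks) => <-; rewrite /near; lia.
- move=> i; case: (set_0Vmem (level P c i)) => [->|[v0]]; first by rewrite cards0.
  rewrite inE => /andP[v0P /eqP c_v0].
  set y0 : vert (gdel P) := Sub v0 (notP _ v0P).
  apply: (@leq_trans #|pblock Q y0|); last exact: leq_bigmax_cond.
  rewrite -(card_imset _ val_inj); apply/subset_leq_card/subsetP => v.
  rewrite inE => /andP[vP /eqP c_v]; apply/imsetP.
  exists (Sub v (notP _ vP)); last by rewrite SubK.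
  have := phi_inj _ _ (blockQ (Sub v (notP _ vP))) (blockQ y0).
  by rewrite -!cE !SubK c_v c_v0 => /(_ erefl) <-.
Qed.

Lemma increasing_le (h : nat -> R) (m N : nat) :
  (forall m m', (1 <= m)%N -> (m < m')%N -> Rlt (h m) (h m')) ->
  (0 < m)%N -> (m <= N)%N -> Rle (h m) (h N).
Proof.
move=> h_incr m_gt0; rewrite leq_eqVlt => /orP[/eqP ->|mN]; first exact: Rle_refl.
exact/Rlt_le/h_incr.
Qed.

Lemma admits_fan_layering (C : graph -> Prop) (f g : nat -> R) (G : graph) (N : nat) :
  (forall m m', (1 <= m)%N -> (m < m')%N -> Rlt (f m) (f m')) ->
  (forall m m', (1 <= m)%N -> (m < m')%N -> Rlt (g m) (g m')) ->
  Rle 0 (f N) -> Rle 0 (g N) ->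
  admits_fan C f g -> C G -> (#|vert G| <= N)%N ->
  exists (P : {set vert G}) (c : vert G -> nat) (W : nat),
    [/\ Rle (INR #|P|) (f N), Rle (INR W) (g N), layered P c &
        forall i, #|level P c i| <= W].
Proof.
move=> f_incr g_incr fN_ge0 gN_ge0 C_fan CG GN.
case: (posnP #|vert G|) => [G_empty|G_gt0].
  exists set0, (fun=> 0), 0; split; rewrite ?cards0 //.
  by move=> i; rewrite -G_empty max_card.
have [P [c [W [P_card W_le c_layered c_level]]]] :=
  fan_partition_layering (C_fan G CG G_gt0).
exists P, c, W; split => //.
  exact: Rle_trans P_card (increasing_le f_incr G_gt0 GN).
exact: Rle_trans W_le (increasing_le g_incr G_gt0 GN).
Qed.

Section StarDecomposition.
Variables (G T : graph) (r : vert T) (B : vert T -> {set vert G}) (k : nat).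
Hypotheses (T_star : is_star r) (B_dec : tree_decomposition B).
Hypothesis B_adh : adhesion_le B k.

Definition home (u : vert G) : vert T := odflt r [pick t | u \in B t].

Lemma mem_home u : u \in B (home u).
Proof.
rewrite /home; case: pickP => [t //|none].
by have [/set0Pn[t +] _] := B_dec.1 u; rewrite inE none.
Qed.

Lemma home_uniq u t : u \notin B r -> u \in B t -> t = home u.
Proof.
move=> ur ut; have := (B_dec.1 u).2 t (home u); rewrite !inE => /(_ ut (mem_home u)).
case/connectP => [[|y p]] /=; first by move=> _ ->.
case/andP => /and3P[ty]; rewrite !inE => ut' uy _ _.
by have [e|e] := T_star.2 _ _ ty; [rewrite -e ut' in ur | rewrite -e uy in ur].
Qed.

Lemma home_neq u : u \notin B r -> home u != r.
Proof. by move=> ur; apply: contraNneq ur => <-; exact: mem_home. Qed.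

Lemma home_adj u v : u \notin B r -> adj G u v -> v \in B (home u).
Proof. by move=> ur /B_dec.2[t [ut vt]]; rewrite -(home_uniq ur ut). Qed.

Definition sep (s : vert T) : {set vert G} := B s :&: B r.

Lemma card_sep s : s != r -> #|sep s| <= k.
Proof. by move=> sr; rewrite /sep setIC; apply/B_adh/T_star.1. Qed.

Lemma sep_torso_adj s (a b : tvert B r) : s != r ->
  val a \in sep s -> val b \in sep s -> val a != val b -> tadj a b.
Proof.
rewrite !inE => sr /andP[aBs _] /andP[bBs _] ab.
by apply/orP; right; rewrite ab; apply/existsP; exists s; rewrite aBs bBs T_star.1.
Qed.

Definition pendant : finType :=
  {p : vert G * vert G | (p.1 \notin B r) && (p.2 \in sep (home p.1))}.

Lemma pendant_attach_mem (p : pendant) : (val p).2 \in B r.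
Proof. by case/andP: (valP p) => _ /setIP[]. Qed.

Definition attach (p : pendant) : tvert B r := Sub (val p).2 (pendant_attach_mem p).

Definition pendant_torso_adj (x y : tvert B r + pendant) : bool :=
  match x, y with
  | inl a, inl b => tadj a b
  | inl a, inr p | inr p, inl a => a == attach p
  | inr _, inr _ => false
  end.

Lemma pendant_torso_adj_sym : symmetric pendant_torso_adj.
Proof. by move=> [a|p] [b|q] //=; apply: tadj_sym. Qed.

Lemma pendant_torso_adj_irr : irreflexive pendant_torso_adj.
Proof. by move=> [a|p] //=; apply: tadj_irr. Qed.

Definition pendant_torso : graph :=
  Graph pendant_torso_adj_sym pendant_torso_adj_irr.

Lemma pendant_torso_hat (H : graph -> Prop) :
  iso_closed H -> H (torso B r) -> hat H pendant_torso.
Proof.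
move=> H_iso H_torso.
pose Z := [set x : vert pendant_torso | if x is inr _ then true else false].
exists Z; split.
  move=> [a|p]; rewrite inE // => _.
  rewrite /degree (_ : [set y | _] = [set inl (attach p)]) ?cards1 //.
  by apply/setP => -[a|q]; rewrite !inE //= eq_sym.
have notZ (a : tvert B r) : (inl a : vert pendant_torso) \in ~: Z by rewrite !inE.
apply: H_iso H_torso; exists (fun a => Sub (inl a) (notZ a) : vert (gdel Z)) => //.
exists (fun y : vert (gdel Z) => match val y with inl a => a | inr p => attach p end).
  by move=> a; rewrite SubK.
by move=> [[a|p] yZ]; [apply: val_inj | exfalso; move: yZ; rewrite !inE].
Qed.

Lemma card_pendant : #|pendant| <= #|~: B r| * k.
Proof.
rewrite card_sig -sum_nat_const -sum1_card.
rewrite (eq_bigl (fun p => (p.1 \notin B r) && (p.2 \in sep (home p.1)))) //.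
rewrite -(pair_big_dep (fun u => u \notin B r) (fun u a => a \in sep (home u))
  (fun _ _ => 1)).
rewrite [X in _ <= X](eq_bigl (fun u => u \notin B r)) => [|u]; last by rewrite inE.
by apply: leq_sum => u ur; rewrite sum1_card; exact/card_sep/home_neq.
Qed.

Lemma card_pendant_torso : 0 < k -> #|vert pendant_torso| <= k * #|vert G|.
Proof.
move=> k_gt0; rewrite card_sum card_sig -(cardsC (B r)) mulnDr [k * #|~: _|]mulnC.
apply: leq_add card_pendant.
by rewrite -[X in X <= _]mul1n leq_mul2r k_gt0 orbT.
Qed.

Section Levels.
Variables (P : {set vert pendant_torso}) (c : vert pendant_torso -> nat).
Hypothesis c_layered : layered P c.

Definition proj (x : vert pendant_torso) : vert G :=
  match x with inl a => val a | inr p => (val p).2 end.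

Definition deleted : {set vert G} := proj @: P.

Lemma notin_proj x : proj x \notin deleted -> x \notin P.
Proof. by apply: contra => xP; exact: imset_f. Qed.

(* Junk value 0 outside the centre bag, resp. for pairs that are not pendants. *)
Definition tlevel (a : vert G) : nat :=
  if insub a : option (tvert B r) is Some x then c (inl x) else 0.

Definition plevel (u a : vert G) : nat :=
  if insub (u, a) : option pendant is Some p then c (inr p) else 0.

Lemma tlevelE (x : tvert B r) : tlevel (val x) = c (inl x).
Proof. by rewrite /tlevel valK. Qed.

Lemma plevelE (p : pendant) : plevel (val p).1 (val p).2 = c (inr p).
Proof. by rewrite /plevel -surjective_pairing valK. Qed.

Lemma tlevel_le_max a : tlevel a <= \max_x c x.
Proof. by rewrite /tlevel; case: insub => // x; exact: leq_bigmax. Qed.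

Definition gate (s : vert T) : {set vert G} := sep s :\: deleted.

Lemma tlevel_near (x y : tvert B r) :
  val x \notin deleted -> val y \notin deleted -> tadj x y ->
  near (tlevel (val x)) (tlevel (val y)).
Proof.
by move=> xd yd xy; rewrite !tlevelE; apply: c_layered => //; exact: notin_proj.
Qed.

Lemma gate_near s a b : s != r -> a \in gate s -> b \in gate s ->
  near (tlevel a) (tlevel b).
Proof.
move=> sr /setDP[a_sep ad] /setDP[b_sep bd].
case: (eqVneq a b) => [->|ab]; first by rewrite /near leqnSn.
have [/setIP[_ ar] /setIP[_ br]] := (a_sep, b_sep).
apply: (tlevel_near (x := Sub a ar) (y := Sub b br)) => //.
exact: sep_torso_adj sr _ _ _.
Qed.

Lemma plevel_near u a : u \notin B r -> a \in gate (home u) ->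
  near (plevel u a) (tlevel a).
Proof.
move=> ur /setDP[a_sep ad].
have pP : ((u, a).1 \notin B r) && ((u, a).2 \in sep (home (u, a).1)) by rewrite ur.
have := plevelE (Sub (u, a) pP); rewrite SubK /= => ->.
rewrite -[a]/(val (attach (Sub (u, a) pP))) tlevelE.
by apply: c_layered => /=; rewrite ?eqxx //; exact: notin_proj.
Qed.

Definition anchor (s : vert T) : option (vert G) :=
  if [pick a in gate s] is Some a0 then Some [arg min_(a < a0 in gate s) tlevel a]
  else None.

Variant anchor_spec (s : vert T) : option (vert G) -> Prop :=
  | AnchorNone of gate s = set0 : anchor_spec s None
  | AnchorSome a of a \in gate s & (forall b, b \in gate s -> tlevel a <= tlevel b) :
      anchor_spec s (Some a).

Lemma anchorP s : anchor_spec s (anchor s).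
Proof.
rewrite /anchor; case: pickP => [a0 a0s|none].
  by case: (arg_minnP tlevel a0s) => a a_gate a_min; constructor.
by apply: AnchorNone; apply/setP => a; rewrite in_set0; exact: none.
Qed.

Definition far_level : nat := (\max_x c x).+2.

Definition glevel (u : vert G) : nat :=
  if u \in B r then tlevel u else
  match anchor (home u) with
  | Some a => if tlevel a < plevel u a then (tlevel a).+1 else tlevel a
  | None => far_level + enum_rank (home u)
  end.

Lemma glevel_centre u : u \in B r -> glevel u = tlevel u.
Proof. by rewrite /glevel => ->. Qed.

Lemma glevel_outside u : u \notin B r ->
  gate (home u) = set0 /\ glevel u = far_level + enum_rank (home u) \/
  exists2 a, a \in gate (home u) &
    (forall b, b \in gate (home u) -> tlevel a <= tlevel b) /\
    glevel u = if tlevel a < plevel u a then (tlevel a).+1 else tlevel a.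
Proof.
by move=> ur; rewrite /glevel (negbTE ur); case: anchorP => [g0|a a_gate a_min];
  [left | right; exists a].
Qed.

Lemma glevel_near_centre u v : u \notin B r -> v \in B r -> v \notin deleted ->
  adj G u v -> near (glevel u) (glevel v).
Proof.
move=> ur vr vd uv; rewrite (glevel_centre vr).
have v_gate : v \in gate (home u) by rewrite !inE vd (home_adj ur uv) vr.
case: (glevel_outside ur) => [[g0 _]|[a a_gate [a_min ->]]].
  by rewrite g0 inE in v_gate.
have := gate_near (home_neq ur) a_gate v_gate; have := a_min v v_gate.
by case: ifP; rewrite /near; lia.
Qed.

Lemma glevel_layered : layered deleted glevel.
Proof.
move=> u v ud vd uv.
case: (boolP (u \in B r)) => ur; case: (boolP (v \in B r)) => vr.
- rewrite !glevel_centre //.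
  by apply: (tlevel_near (x := Sub u ur) (y := Sub v vr)) => //; rewrite /tadj /= uv.
- by rewrite near_sym; apply: glevel_near_centre; rewrite // adj_sym.
- exact: glevel_near_centre.
- have home_vu : home v = home u by rewrite (home_uniq vr (home_adj ur uv)).
  rewrite /glevel (negbTE ur) (negbTE vr) home_vu.
  case: anchorP => [_|a _ _]; first by rewrite /near leqnSn.
  by do 2 case: ifP; rewrite /near; lia.
Qed.

Lemma far_glevel u : far_level <= glevel u ->
  u \notin B r /\ glevel u = far_level + enum_rank (home u).
Proof.
have tlevel_lt a : (tlevel a).+1 < far_level by rewrite ltnS ltnS tlevel_le_max.
case: (boolP (u \in B r)) => ur; first by rewrite glevel_centre // leqNgt ltnW.
case: (glevel_outside ur) => [[_ ->] //|[a _ [_ ->]]].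
by case: ifP => _; rewrite leqNgt ?tlevel_lt // ltnW.
Qed.

Lemma card_level_near (W : nat) K : (forall i, #|level P c i| <= W) ->
  K < far_level -> #|level deleted glevel K| <= W + W.
Proof.
move=> c_level K_near.
pose owner (x : vert pendant_torso) : vert G :=
  match x with inl a => val a | inr p => (val p).1 end.
apply: (@leq_trans #|owner @: (level P c K.-1 :|: level P c K)|); last first.
  apply: leq_trans (leq_imset_card _ _) _.
  by apply: leq_trans (leq_card_setU _ _) _; apply: leq_add.
apply/subset_leq_card/subsetP => u; rewrite inE => /andP[ud /eqP uK].
case: (boolP (u \in B r)) => ur.
  apply/imsetP; exists (inl (Sub u ur)) => //.
  by rewrite !inE notin_proj //= -tlevelE SubK -glevel_centre // uK eqxx orbT.
case: (glevel_outside ur) => [[_ uK']|[a a_gate [_ ua]]].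
  by move: K_near; rewrite -uK uK' ltnNge leq_addr.
have /setDP[a_sep ad] := a_gate.
have pP : ((u, a).1 \notin B r) && ((u, a).2 \in sep (home (u, a).1)) by rewrite ur.
apply/imsetP; exists (inr (Sub (u, a) pP)) => //.
rewrite !inE notin_proj //= -(plevelE (Sub (u, a) pP)) SubK /=.
have := plevel_near ur a_gate.
by move: uK; rewrite ua; case: ifP; rewrite /near; lia.
Qed.

Lemma card_level_far (w : R) K :
  (forall s, s != r -> Rle (INR #|B s :\: B r|) w) -> Rle 0 w -> far_level <= K ->
  Rle (INR #|level deleted glevel K|) w.
Proof.
move=> bag_w w_ge0 K_far.
case: (set_0Vmem (level deleted glevel K)) => [->|[u0]]; first by rewrite cards0.
rewrite inE => /andP[_ /eqP u0K].
have [u0r u0E] : u0 \notin B r /\ glevel u0 = far_level + enum_rank (home u0).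
  by apply: far_glevel; rewrite u0K.
apply/(Rle_trans _ _ _ _ (bag_w _ (home_neq u0r)))/le_INR/leP/subset_leq_card/subsetP.
move=> u; rewrite inE => /andP[_ /eqP uK].
have [ur uE] : u \notin B r /\ glevel u = far_level + enum_rank (home u).
  by apply: far_glevel; rewrite uK.
have home_u : enum_rank (home u) = enum_rank (home u0).
  by apply/val_inj/eqP; rewrite /= -(eqn_add2l far_level) -uE -u0E uK u0K.
by rewrite inE ur -(enum_rank_inj home_u) mem_home.
Qed.

Lemma has_path_partition_deleted (W : nat) (gW w : R) :
  (forall i, #|level P c i| <= W) -> Rle (INR W) gW -> Rle 0 w ->
  (forall s, s != r -> Rle (INR #|B s :\: B r|) w) ->
  has_path_partition (gdel deleted) (Rmax (2 * gW) w).
Proof.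
move=> c_level W_le w_ge0 bag_w.
apply: (has_path_partition_gdel glevel_layered) => [K|]; last first.
  exact: Rle_trans w_ge0 (Rmax_r _ _).
have [K_near|K_far] := ltnP K far_level; last first.
  exact: Rle_trans (card_level_far bag_w w_ge0 K_far) (Rmax_r _ _).
apply: Rle_trans (Rmax_l _ _); apply: (@Rle_trans _ (INR (W + W))).
  exact/le_INR/leP/card_level_near.
rewrite plus_INR; lra.
Qed.

End Levels.
End StarDecomposition.

Theorem mainTheorem6 (k n : nat) (w : R) (f g : nat -> R)
  (H : graph -> Prop) (G : graph) (T : graph) (r : vert T)
  (B : vert T -> {set vert G}) :
  (1 <= k)%N -> (1 <= n)%N -> Rlt 0 w ->
  (forall m, (1 <= m)%N -> Rlt 0 (f m)) ->
  (forall m, (1 <= m)%N -> Rlt 0 (g m)) ->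
  (forall m m', (1 <= m)%N -> (m < m')%N -> Rlt (f m) (f m')) ->
  (forall m m', (1 <= m)%N -> (m < m')%N -> Rlt (g m) (g m')) ->
  iso_closed H ->
  admits_fan (hat H) f g ->
  #|vert G| = n ->
  is_star r ->
  tree_decomposition B ->
  adhesion_le B k ->
  H (torso B r) ->
  (forall s, s != r -> Rle (INR #|B s :\: B r|) w) ->
  exists X : {set vert G},
    Rle (INR #|X|) (f (k * n)%N) /\
    has_path_partition (gdel X) (Rmax (2 * g (k * n)%N) w).
Proof.
move=> k_gt0 n_gt0 w_gt0 f_gt0 g_gt0 f_incr g_incr H_iso H_fan G_card
  T_star B_dec B_adh H_torso bag_w.
have kn_gt0 : (0 < k * n)%N by rewrite muln_gt0 k_gt0 n_gt0.
have card_kn : (#|vert (pendant_torso r B)| <= k * n)%N.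
  by rewrite -G_card; exact: card_pendant_torso T_star B_dec B_adh k_gt0.
have [P [c [W [P_card W_le c_layered c_level]]]] :=
  admits_fan_layering f_incr g_incr (Rlt_le _ _ (f_gt0 _ kn_gt0))
    (Rlt_le _ _ (g_gt0 _ kn_gt0)) H_fan (pendant_torso_hat H_iso H_torso)
    card_kn.
exists (deleted P); split.
  exact: Rle_trans (le_INR _ _ (leP (leq_imset_card _ _))) P_card.
exact (has_path_partition_deleted T_star B_dec c_layered c_level W_le
  (Rlt_le _ _ w_gt0) bag_w).
Qed.
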